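(* Let $A$ be a Hopf algebra and $R$ a unital algebra. Then a linear map $\cdot:A\otimes R\to R$ makes $R$ a partial $A$-module algebra in the Hopf-algebraic sense (conditions (H1)--(H3) below) if and only if there is a linear map $\mathfrak e:A\to R=M(R)$ such that $(R,\cdot,\mathfrak e)$ is a partial $A$-module algebra in the multiplier sense (conditions (i)--(iv) below); in that case $\mathfrak e(a)=a\cdot 1_R$. (H1) $1_A\cdot x=x$; (H2) $a\cdot(xy)=(a_{(1)}\cdot x)(a_{(2)}\cdot y)$; (H3) $a\cdot(b\cdot x)=(a_{(1)}\cdot 1_R)(a_{(2)}b\cdot x)$, for all $a,b\in A$, $x,y\in R$.
   Context: A partial $A$-module algebra in the multiplier sense is a triple $(R,\cdot,\mathfrak e)$, with $\cdot:A\otimes R\to R$ and $\mathfrak e:A\to M(R)$ linear, such that for all $a,b\in A$, $x,y\in R$: (i) $a\cdot(x(b\cdot y))=(a_{(1)}\cdot x)(a_{(2)}b\cdot y)$; (ii) $\mathfrak e(a)(b\cdot x)=a_{(1)}\cdot(S(a_{(2)})b\cdot x)$ and $\mathfrak e(A)R\subseteq A\cdot R$ (the linear span of the $a\cdot x$); (iii) given $a_1,\dots,a_n\in A$ and $x_1,\dots,x_m\in R$ there exists $b\in A$ with $a_ib=a_i=ba_i$ and $a_i\cdot x_j=a_i\cdot(b\cdot x_j)$ for all $i,j$; (iv) $A\cdot x=0$ implies $x=0$. Here $S$ is the antipode of $A$ and Sweedler notation is used. *)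

From HB Require Import structures.
From mathcomp Require Import all_boot all_order all_algebra.
Set Implicit Arguments. Unset Strict Implicit. Unset Printing Implicit Defensive.
Import GRing.Theory.
Local Open Scope ring_scope.

Definition klinear (K : fieldType) (U V : lmodType K) (f : U -> V) : Prop :=
  forall (k : K) (u v : U), f (k *: u + v) = k *: f u + f v.

Definition kfunctional (K : fieldType) (U : lmodType K) (f : U -> K) : Prop :=
  forall (k : K) (u v : U), f (k *: u + v) = k * f u + f v.

Definition kbilinear (K : fieldType) (U1 U2 V : lmodType K)
  (f : U1 -> U2 -> V) : Prop :=
  (forall u1, klinear (f u1)) /\ (forall u2, klinear (fun u1 => f u1 u2)).

Definition ktrilinear (K : fieldType) (U1 U2 U3 V : lmodType K)
  (f : U1 -> U2 -> U3 -> V) : Prop :=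
  (forall u1 u2, klinear (f u1 u2)) /\
  (forall u1 u3, klinear (fun u2 => f u1 u2 u3)) /\
  (forall u2 u3, klinear (fun u1 => f u1 u2 u3)).

(* Tensors in A (x) A are represented by finite lists of simple tensors
   s = [:: (u_1,v_1); ...] standing for sum_i u_i (x) v_i.  A coproduct is
   given by a map delta : A -> seq (A * A) choosing a representative of
   Delta(a) = sum a_(1) (x) a_(2) (Sweedler notation).  All axioms are stated
   through the universal property of the tensor product, i.e. after applying
   an arbitrary (bi/tri)linear map into an arbitrary K-vector space; hence
   they only depend on the tensor represented, not on the representative. *)
Record isHopfAlgebra (K : fieldType) (A : algType K)
    (delta : A -> seq (A * A)) (eps : A -> K) (S : A -> A) : Prop := {
  hopf_delta_lin : forall (V : lmodType K) (f : A -> A -> V), kbilinear f ->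
    forall (k : K) (a b : A),
      \sum_(p <- delta (k *: a + b)) f p.1 p.2 =
      k *: (\sum_(p <- delta a) f p.1 p.2) + \sum_(p <- delta b) f p.1 p.2;
  hopf_coassoc : forall (V : lmodType K) (g : A -> A -> A -> V), ktrilinear g ->
    forall a : A,
      \sum_(p <- delta a) \sum_(q <- delta p.1) g q.1 q.2 p.2 =
      \sum_(p <- delta a) \sum_(q <- delta p.2) g p.1 q.1 q.2;
  hopf_eps_lin : kfunctional eps;
  hopf_counitl : forall a : A, \sum_(p <- delta a) eps p.1 *: p.2 = a;
  hopf_counitr : forall a : A, \sum_(p <- delta a) eps p.2 *: p.1 = a;
  hopf_delta_mul : forall (V : lmodType K) (f : A -> A -> V), kbilinear f ->
    forall a b : A,
      \sum_(p <- delta (a * b)) f p.1 p.2 =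
      \sum_(p <- delta a) \sum_(q <- delta b) f (p.1 * q.1) (p.2 * q.2);
  hopf_delta_one : forall (V : lmodType K) (f : A -> A -> V), kbilinear f ->
      \sum_(p <- delta 1) f p.1 p.2 = f 1 1;
  hopf_eps_mul : forall a b : A, eps (a * b) = eps a * eps b;
  hopf_eps_one : eps 1 = 1;
  hopf_S_lin : klinear S;
  hopf_antipodel : forall a : A, \sum_(p <- delta a) S p.1 * p.2 = eps a *: 1;
  hopf_antipoder : forall a : A, \sum_(p <- delta a) p.1 * S p.2 = eps a *: 1
}.

Definition partial_mod_alg_hopf (K : fieldType) (A : algType K)
    (delta : A -> seq (A * A)) (R : algType K) (act : A -> R -> R) : Prop :=
  (forall x : R, act 1 x = x) /\
  (forall (a : A) (x y : R),
      act a (x * y) = \sum_(p <- delta a) act p.1 x * act p.2 y) /\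
  (forall (a b : A) (x : R),
      act a (act b x) = \sum_(p <- delta a) act p.1 1 * act (p.2 * b) x).

(* Partial A-module algebra in the multiplier sense, (i)-(iv), for a unital
   algebra R, where the multiplier algebra M(R) is identified with R. *)
Definition partial_mod_alg_mult (K : fieldType) (A : algType K)
    (delta : A -> seq (A * A)) (S : A -> A) (R : algType K)
    (act : A -> R -> R) (e : A -> R) : Prop :=
  (forall (a b : A) (x y : R),
      act a (x * act b y) = \sum_(p <- delta a) act p.1 x * act (p.2 * b) y) /\
  (forall (a b : A) (x : R),
      e a * act b x = \sum_(p <- delta a) act p.1 (act (S p.2 * b) x)) /\
  (forall (a : A) (x : R), exists s : seq (K * (A * R)),
      e a * x = \sum_(q <- s) q.1 *: act q.2.1 q.2.2) /\
  (forall (as_ : seq A) (xs : seq R), exists b : A,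
      forall a, a \in as_ ->
        [/\ a * b = a, b * a = a & forall x, x \in xs -> act a x = act a (act b x)]) /\
  (forall x : R, (forall a : A, act a x = 0) -> x = 0).

From HB Require Import structures.
From mathcomp Require Import all_boot all_order all_algebra.
Set Implicit Arguments. Unset Strict Implicit. Unset Printing Implicit Defensive.
Import GRing.Theory.
Local Open Scope ring_scope.

(* Coassociativity and the identity a_(1) (x) a_(2) S(a_(3)) = a (x) 1 turn
   (H3) into  sum a_(1).(S(a_(2)) b . x) = (a.1)(b.x),  which is (ii) for
   e(a) = a.1; likewise (H2), (H3) and coassociativity give (i), while (iii)
   and (iv) hold with b = 1 because 1 acts as the identity.
   Conversely (H3) is (i) at x = 1, and (H2) is (i) at b = 1 once (H1) is
   known.  For (H1), take a local unit b of a and of all the a_(2): by (H3)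
   a.(b.y) = sum (a_(1).1)(a_(2).y) = a.(1.y), and by (iii) a.(b.y) = a.y,
   so (iv) kills y - 1.y.  Finally e is forced: by (ii) at b = x = 1,
   e(a) = e(a)(1.1) = (a.1)(1.1) = a.1. *)

Section KLinear.
Variables (K : fieldType) (U V : lmodType K) (f : U -> V) (f_lin : klinear f).

Lemma klinear0 : f 0 = 0.
Proof.
have := f_lin 1 0 0; rewrite !scale1r !addr0 => f00.
by apply: (addrI (f 0)); rewrite -f00 addr0.
Qed.

Lemma klinearD u v : f (u + v) = f u + f v.
Proof. by have := f_lin 1 u v; rewrite !scale1r. Qed.

Lemma klinearZ k u : f (k *: u) = k *: f u.
Proof. by have := f_lin k u 0; rewrite !addr0 klinear0 addr0. Qed.

Lemma klinearB u v : f (u - v) = f u - f v.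
Proof. by rewrite -scaleN1r addrC f_lin scaleN1r addrC. Qed.

Lemma klinear_sum (I : Type) (s : seq I) (F : I -> U) :
  f (\sum_(i <- s) F i) = \sum_(i <- s) f (F i).
Proof. exact: (big_morph f klinearD klinear0). Qed.

End KLinear.

Section PartialModuleAlgebra.
Variables (K : fieldType) (A : algType K) (delta : A -> seq (A * A))
  (eps : A -> K) (S : A -> A) (hA : isHopfAlgebra delta eps S)
  (R : algType K) (act : A -> R -> R) (act_lin : kbilinear act).

Let act_linl x : klinear (fun a => act a x) := act_lin.2 x.
Let act_linr a : klinear (act a) := act_lin.1 a.

Definition act_compose_law :=
  forall a b x, act a (act b x) = \sum_(p <- delta a) act p.1 1 * act (p.2 * b) x.

Lemma act_antipode_sum (H3 : act_compose_law) a b x :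
  \sum_(p <- delta a) act p.1 (act (S p.2 * b) x) = act a 1 * act b x.
Proof.
under eq_bigr => p _ do rewrite H3.
pose g u v w := act u 1 * act (v * (S w * b)) x.
have g_lin : ktrilinear g.
  split; [|split] => [u v k w w'|u w k v v'|v w k u u']; rewrite /g.
  - rewrite (hopf_S_lin hA) mulrDl mulrDr -scalerAl -scalerAr (act_linl x).
    by rewrite mulrDr scalerAr.
  - by rewrite mulrDl -scalerAl (act_linl x) mulrDr scalerAr.
  - by rewrite (act_linl 1) mulrDl scalerAl.
rewrite (hopf_coassoc hA g_lin a) /g.
transitivity (\sum_(p <- delta a) (eps p.2 *: act p.1 1) * act b x).
  apply: eq_bigr => p _; rewrite -mulr_sumr -scalerAl scalerAr; congr (_ * _).
  rewrite -(klinear_sum (act_linl x)).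
  under eq_bigr => q _ do rewrite mulrA.
  by rewrite -mulr_suml (hopf_antipoder hA) -scalerAl mul1r (klinearZ (act_linl x)).
rewrite -mulr_suml -{2}(hopf_counitr hA a) (klinear_sum (act_linl 1)).
by congr (_ * _); apply: eq_bigr => p _; rewrite (klinearZ (act_linl 1)).
Qed.

Section FromMultiplier.
Variables (e : A -> R) (he : partial_mod_alg_mult delta S act e).

Lemma mult_act_compose : act_compose_law.
Proof. by have [hi _] := he; move=> a b x; rewrite -hi mul1r. Qed.

Lemma mult_act1 y : act 1 y = y.
Proof.
have [_ [_ [_ [local_unit nondeg]]]] := he.
apply/eqP; rewrite -subr_eq0; apply/eqP/nondeg => a.
rewrite (klinearB (act_linr a)); apply/eqP; rewrite subr_eq0; apply/eqP.
have [b hb] := local_unit (a :: map snd (delta a)) [:: y].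
have [_ _ local_a] := hb a (mem_head _ _).
rewrite [RHS](local_a y (mem_head _ _)) !mult_act_compose; apply: eq_big_seq => p p_delta.
have [-> _ _] := hb p.2 (mem_behead (s := a :: _) (map_f snd p_delta)).
by rewrite mulr1.
Qed.

Lemma mult_partial_mod_alg_hopf : partial_mod_alg_hopf delta act.
Proof.
have [hi _] := he.
split; [exact: mult_act1 | split; last exact: mult_act_compose].
move=> a x y; rewrite -{1}(mult_act1 y) hi.
by apply: eq_bigr => p _; rewrite mulr1.
Qed.

Lemma mult_unit_act a : e a = act a 1.
Proof.
have [_ [hii _]] := he.
have := hii a 1 1; rewrite mult_act1 mulr1 => ->.
by rewrite (act_antipode_sum mult_act_compose) mult_act1 mulr1.
Qed.

End FromMultiplier.

Section FromHopf.
Hypothesis (hH : partial_mod_alg_hopf delta act).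

Lemma hopf_act_mul_act a b x y :
  act a (x * act b y) = \sum_(p <- delta a) act p.1 x * act (p.2 * b) y.
Proof.
have [_ [H2 H3]] := hH.
rewrite H2; under eq_bigr => p _ do rewrite H3 mulr_sumr.
pose g u v w := act u x * (act v 1 * act (w * b) y).
have g_lin : ktrilinear g.
  split; [|split] => [u v k w w'|u w k v v'|v w k u u']; rewrite /g.
  - by rewrite mulrDl -scalerAl (act_linl y) mulrDr scalerAr mulrDr scalerAr.
  - by rewrite (act_linl 1) mulrDl -scalerAl mulrDr -scalerAr.
  - by rewrite (act_linl x) mulrDl -scalerAl.
rewrite -(hopf_coassoc hA g_lin a) /g; apply: eq_bigr => p _.
under eq_bigr => q _ do rewrite mulrA.
by rewrite -mulr_suml -H2 mulr1.
Qed.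

Lemma hopf_partial_mod_alg_mult :
  partial_mod_alg_mult delta S act (fun a => act a 1).
Proof.
have [H1 [_ H3]] := hH.
split; first exact: hopf_act_mul_act.
split; first by move=> a b x; rewrite act_antipode_sum.
split.
  move=> a x; exists [seq (1, (p.1, act (S p.2) x)) | p <- delta a].
  rewrite -{1}(H1 x) -act_antipode_sum // big_map.
  by apply: eq_bigr => p _; rewrite scale1r mulr1.
split; last by move=> x act_x0; rewrite -(H1 x) act_x0.
by exists 1 => a _; split; rewrite ?mulr1 ?mul1r // => x _; rewrite H1.
Qed.

End FromHopf.

End PartialModuleAlgebra.

Theorem mainTheorem9 (K : fieldType) (A : algType K)
    (delta : A -> seq (A * A)) (eps : A -> K) (S : A -> A)
    (hA : isHopfAlgebra delta eps S)
    (R : algType K) (act : A -> R -> R) (hact : kbilinear act) :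
  (partial_mod_alg_hopf delta act <->
     exists e : A -> R, klinear e /\ partial_mod_alg_mult delta S act e) /\
  (forall e : A -> R, klinear e -> partial_mod_alg_mult delta S act e ->
     forall a : A, e a = act a 1).
Proof.
split; last by move=> e _ he a; exact: (mult_unit_act hA hact he).
split; last by move=> [e [_ he]]; exact: (mult_partial_mod_alg_hopf hact he).
move=> hH; exists (fun a => act a 1).
by split; [exact: hact.2 | exact: (hopf_partial_mod_alg_mult hA hact hH)].
Qed.
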